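(* Let $\Lambda\in P^+$ and let $\beta=\alpha_{j_1}+\dots+\alpha_{j_n}$ with $j_1,\dots,j_n\in I$ pairwise distinct. Then the center $\mathcal{Z}$ of $R^\Lambda(\beta)$ satisfies $\mathcal{Z}\subseteq\bigoplus_{\mu\in I^\beta}\mathcal{P}_\mu e(\mu)$, where $\mathcal{P}_\mu e(\mu)$ denotes the $\mathbf{k}$-span in $R^\Lambda(\beta)$ of all elements $x_1^{t_1}\cdots x_n^{t_n}e(\mu)$, $t_i\in\mathbb{Z}_{\ge0}$.
   Context: Fix a field $\mathbf{k}$ of characteristic $\neq 2$. A Cartan superdatum consists of an index set $I$; a symmetrizable generalized Cartan matrix $A=(a_{ij})_{i,j\in I}$ ($a_{ii}=2$, $a_{ij}\le 0$ for $i\ne j$, $a_{ij}=0\iff a_{ji}=0$, positive integers $d_i$ with $d_ia_{ij}=d_ja_{ji}$); a free abelian group $P$; $\mathbb{Z}$-linearly independent $\alpha_i\in P$; $h_i\in\mathrm{Hom}_{\mathbb{Z}}(P,\mathbb{Z})$ with $\langle h_i,\alpha_j\rangle=a_{ij}$; and $I=I_{\mathrm{even}}\sqcup I_{\mathrm{odd}}$ with $a_{ij}\in2\mathbb{Z}$ whenever $i\in I_{\mathrm{odd}}$. A symmetric bilinear form $(\cdot|\cdot)$ on $P$ satisfies $(\alpha_i|\lambda)=d_i\langle h_i,\lambda\rangle$. Parity $\mathrm{p}(i)=1$ if $i\in I_{\mathrm{odd}}$, $0$ otherwise. $P^+=\{\Lambda:\langle h_i,\Lambda\rangle\ge0\ \forall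 i\}$; $I^\beta=\{\nu\in I^n:\sum_s\alpha_{\nu_s}=\beta\}$. For $\nu\in I^n$, $\mathcal{P}_\nu=\mathbf{k}\langle\mathrm{x}_1,\dots,\mathrm{x}_n\rangle/(\mathrm{x}_a\mathrm{x}_b-(-1)^{\mathrm{p}(\nu_a)\mathrm{p}(\nu_b)}\mathrm{x}_b\mathrm{x}_a)$. Fix $Q_{ij}(\mathrm{x}_1,\mathrm{x}_2)=\sum_{r,s}t_{i,j;(r,s)}\mathrm{x}_1^r\mathrm{x}_2^s\in\mathcal{P}_{(i,j)}$ with: $t_{i,j;(r,s)}\ne0$ only if $-2(\alpha_i|\alpha_j)-r(\alpha_i|\alpha_i)-s(\alpha_j|\alpha_j)=0$; $t_{i,j;(r,s)}=t_{j,i;(s,r)}$; $t_{i,j;(-a_{ij},0)}\in\mathbf{k}^\times$; $t_{i,j;(r,s)}=0$ if $i=j$ or ($i\in I_{\mathrm{odd}}$ and $r$ odd). $R(\beta)$ is the $\mathbf{k}$-algebra with generators $e(\nu)$ ($\nu\in I^\beta$), $x_1,\dots,x_n$, $\tau_1,\dots,\tau_{n-1}$ and relations: $e(\mu)e(\nu)=\delta_{\mu\nu}e(\nu)$, $\sum_\nu e(\nu)=1$; $x_px_qe(\nu)=(-1)^{\mathrm{p}(\nu_p)\mathrm{p}(\nu_q)}x_qx_pe(\nu)$ ($p\ne q$); $x_pe(\nu)=e(\nu)x_p$; $\tau_ae(\nu)=e(s_a\nu)\tau_a$; $\tau_ax_pe(\nu)=(-1)^{\mathrm{p}(\nu_p)\mathrm{p}(\nu_a)\mathrm{p}(\nu_{a+1})}x_p\tau_ae(\nu)$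 ($p\ne a,a+1$); $(\tau_ax_{a+1}-(-1)^{\mathrm{p}(\nu_a)\mathrm{p}(\nu_{a+1})}x_a\tau_a)e(\nu)=(x_{a+1}\tau_a-(-1)^{\mathrm{p}(\nu_a)\mathrm{p}(\nu_{a+1})}\tau_ax_a)e(\nu)=\delta_{\nu_a,\nu_{a+1}}e(\nu)$; $\tau_a^2e(\nu)=Q_{\nu_a,\nu_{a+1}}(x_a,x_{a+1})e(\nu)$; $\tau_a\tau_be(\nu)=(-1)^{\mathrm{p}(\nu_a)\mathrm{p}(\nu_{a+1})\mathrm{p}(\nu_b)\mathrm{p}(\nu_{b+1})}\tau_b\tau_ae(\nu)$ ($|a-b|>1$); $(\tau_{a+1}\tau_a\tau_{a+1}-\tau_a\tau_{a+1}\tau_a)e(\nu)$ equals $\frac{Q_{\nu_a,\nu_{a+1}}(x_{a+2},x_{a+1})-Q_{\nu_a,\nu_{a+1}}(x_a,x_{a+1})}{x_{a+2}-x_a}e(\nu)$ if $\nu_a=\nu_{a+2}\in I_{\mathrm{even}}$, $(-1)^{\mathrm{p}(\nu_{a+1})}(x_{a+2}-x_a)\frac{Q_{\nu_a,\nu_{a+1}}(x_{a+2},x_{a+1})-Q_{\nu_a,\nu_{a+1}}(x_a,x_{a+1})}{x_{a+2}^2-x_a^2}e(\nu)$ if $\nu_a=\nu_{a+2}\in I_{\mathrm{odd}}$, $0$ otherwise; $s_a=(a,a+1)$, and $\mathfrak{S}_n$ acts on $I^n$ by $(w\nu)_j=\nu_{w^{-1}(j)}$. For $\Lambda\in P^+$,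 $R^\Lambda(\beta)=R(\beta)/\langle\sum_{\nu}x_1^{\langle h_{\nu_1},\Lambda\rangle}e(\nu)\rangle$. *)

From HB Require Import structures.
From mathcomp Require Import all_boot all_order all_algebra.
Set Implicit Arguments.
Unset Strict Implicit.
Unset Printing Implicit Defensive.
Import Order.TTheory GRing.Theory Num.Theory.
Local Open Scope ring_scope.

(* The weight lattice P is the free abelian group 'rV[int]_m,          *)
(* h_i in Hom(P,Z) is given by a column vector: <h_i, lam> = lam *m h_i *)

Definition pairing (m : nat) (h : 'cV[int]_m) (lam : 'rV[int]_m) : int :=
  (lam *m h) 0 0.

Definition bform (m : nat) (B : 'M[int]_m) (u v : 'rV[int]_m) : int :=
  (u *m B *m v^T) 0 0.

Definition cartan_superdatum (I : finType) (a : I -> I -> int) (d : I -> nat)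
  (m : nat) (alpha : I -> 'rV[int]_m) (h : I -> 'cV[int]_m) (par : I -> bool) : Prop :=
  (forall i, a i i = 2) /\
  (forall i j, i != j -> a i j <= 0) /\
  (forall i j, a i j = 0 <-> a j i = 0) /\
  (forall i, (0 < d i)%N) /\
  (forall i j, (d i)%:Z * a i j = (d j)%:Z * a j i) /\
  (forall c : I -> int, \sum_(i : I) c i *: alpha i = 0 -> forall i, c i = 0) /\
  (forall i j, pairing (h i) (alpha j) = a i j) /\
  (forall i j, par i -> (2 %| a i j)%Z).

Definition compatible_form (I : finType) (d : I -> nat) (m : nat)
  (alpha : I -> 'rV[int]_m) (h : I -> 'cV[int]_m) (B : 'M[int]_m) : Prop :=
  B^T = B /\ forall i lam, bform B (alpha i) lam = (d i)%:Z * pairing (h i) lam.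

Definition Q_coeffs (k : fieldType) (I : finType) (a : I -> I -> int) (m : nat)
  (alpha : I -> 'rV[int]_m) (B : 'M[int]_m) (par : I -> bool)
  (t : I -> I -> nat -> nat -> k) : Prop :=
  [/\ (forall i j r s, t i j r s != 0 ->
         - 2 * bform B (alpha i) (alpha j) - r%:Z * bform B (alpha i) (alpha i)
           - s%:Z * bform B (alpha j) (alpha j) = 0),
      (forall i j r s, t i j r s = t j i s r),
      (forall i j, i != j -> t i j `|a i j|%N 0 != 0),
      (forall i r s, t i i r s = 0) &
      (forall i j r s, par i -> odd r -> t i j r s = 0) ].

(* Positions are 0-based: x p (p < n) is x_{p+1}, tau a (a+1 < n) is   *)
(* tau_{a+1}, swapping positions a and a+1.                            *)

Definition sgn (k : pzRingType) (b : bool) : k := if b then -1 else 1.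

Definition parv (I : Type) (par : I -> bool) (nu : seq I) (p : nat) : bool :=
  if onth nu p is Some i then par i else false.

Definition swapnat (a p : nat) : nat :=
  if p == a then a.+1 else if p == a.+1 then a else p.

Definition tswap (I : Type) (n : nat) (a : nat) (nu : n.-tuple I) : n.-tuple I :=
  [tuple tnth nu (insubd k (swapnat a k)) | k < n].

Definition Ibeta (I : Type) (m n : nat) (alpha : I -> 'rV[int]_m)
  (beta : 'rV[int]_m) (nu : n.-tuple I) : bool :=
  \sum_(i <- nu) alpha i == beta.

(* Q_{ij}(X, Y) = sum t_{i,j;(r,s)} X^r Y^s; the support is contained in
   r <= |a_ij|, s <= |a_ji| by the degree condition. *)
Definition Qpol (k : fieldType) (A : algType k) (I : Type) (a : I -> I -> int)
  (t : I -> I -> nat -> nat -> k) (i j : I) (X Y : A) : A :=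
  \sum_(r < `|a i j|.+1) \sum_(s < `|a j i|.+1)
     t i j r s *: (X ^+ r * Y ^+ s).

(* (Q_ij(X,Y) - Q_ij(Z,Y)) / (X - Z), computed in the commutative
   subalgebra generated by X, Z, Y (case nu_a = nu_{a+2} even) *)
Definition DQeven (k : fieldType) (A : algType k) (I : Type) (a : I -> I -> int)
  (t : I -> I -> nat -> nat -> k) (i j : I) (X Z Y : A) : A :=
  \sum_(r < `|a i j|.+1) \sum_(s < `|a j i|.+1)
     t i j r s *: ((\sum_(q < r) X ^+ q * Z ^+ (r.-1 - q)) * Y ^+ s).

(* (Q_ij(X,Y) - Q_ij(Z,Y)) / (X^2 - Z^2), where only even r occur
   (case nu_a = nu_{a+2} odd; X^2, Z^2, Y pairwise commute) *)
Definition DQodd (k : fieldType) (A : algType k) (I : Type) (a : I -> I -> int)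
  (t : I -> I -> nat -> nat -> k) (i j : I) (X Z Y : A) : A :=
  \sum_(r < `|a i j|.+1) \sum_(s < `|a j i|.+1)
     t i j r s *: ((\sum_(q < r./2) (X ^+ 2) ^+ q * (Z ^+ 2) ^+ (r./2.-1 - q))
                   * Y ^+ s).

(* lamh i = <h_i, Lambda>                                              *)
Definition cycQH_rels (k : fieldType) (I : finType) (a : I -> I -> int)
  (par : I -> bool) (t : I -> I -> nat -> nat -> k) (lamh : I -> nat)
  (m : nat) (alpha : I -> 'rV[int]_m) (beta : 'rV[int]_m) (n : nat)
  (B : algType k) (e : n.-tuple I -> B) (x : nat -> B) (tau : nat -> B) : Prop :=
  let Ib := Ibeta alpha beta in
  let pv (nu : n.-tuple I) := parv par nu in
      (forall mu nu, Ib mu -> Ib nu -> e mu * e nu = if mu == nu then e nu else 0) /\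
      (\sum_(nu | Ib nu) e nu = 1) /\
      (forall nu p q, Ib nu -> (p < n)%N -> (q < n)%N -> p != q ->
         x p * x q * e nu = sgn k (pv nu p && pv nu q) *: (x q * x p * e nu)) /\
      (forall nu p, Ib nu -> (p < n)%N -> x p * e nu = e nu * x p) /\
      (forall nu a0, Ib nu -> (a0.+1 < n)%N -> tau a0 * e nu = e (tswap a0 nu) * tau a0) /\
      (forall nu a0 p, Ib nu -> (a0.+1 < n)%N -> (p < n)%N -> p != a0 -> p != a0.+1 ->
         tau a0 * x p * e nu
         = sgn k [&& pv nu p, pv nu a0 & pv nu a0.+1] *: (x p * tau a0 * e nu)) /\
      (forall nu a0, Ib nu -> (a0.+1 < n)%N ->
         (tau a0 * x a0.+1 - sgn k (pv nu a0 && pv nu a0.+1) *: (x a0 * tau a0)) * e nu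
         = (if onth nu a0 == onth nu a0.+1 then e nu else 0)
      /\ (x a0.+1 * tau a0 - sgn k (pv nu a0 && pv nu a0.+1) *: (tau a0 * x a0)) * e nu
         = (if onth nu a0 == onth nu a0.+1 then e nu else 0)) /\
      (forall nu a0 i j, Ib nu -> (a0.+1 < n)%N ->
         onth nu a0 = Some i -> onth nu a0.+1 = Some j ->
         tau a0 ^+ 2 * e nu = Qpol a t i j (x a0) (x a0.+1) * e nu) /\
      (forall nu a0 b, Ib nu -> (a0.+1 < n)%N -> (b.+1 < n)%N ->
         (a0.+1 < b)%N || (b.+1 < a0)%N ->
         tau a0 * tau b * e nu
         = sgn k [&& pv nu a0, pv nu a0.+1, pv nu b & pv nu b.+1] *: (tau b * tau a0 * e nu)) /\
      (forall nu a0 i j, Ib nu -> (a0.+2 < n)%N ->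
         onth nu a0 = Some i -> onth nu a0.+1 = Some j ->
         (tau a0.+1 * tau a0 * tau a0.+1 - tau a0 * tau a0.+1 * tau a0) * e nu
         = (if onth nu a0.+2 == Some i then
              (if par i then
                 sgn k (par j) *: ((x a0.+2 - x a0) * DQodd a t i j (x a0.+2) (x a0) (x a0.+1))
               else DQeven a t i j (x a0.+2) (x a0) (x a0.+1)) * e nu
            else 0)) /\
      (\sum_(nu | Ib nu) (if onth nu 0 is Some i then x 0 ^+ lamh i * e nu else 0) = 0).

Definition generated_by (k : fieldType) (A : algType k) (G : A -> Prop) : Prop :=
  forall S : A -> Prop,
    S 1 -> (forall u v, S u -> S v -> S (u + v)) ->
    (forall u v, S u -> S v -> S (u * v)) -> (forall c u, S u -> S (c *: u)) ->
    (forall g, G g -> S g) -> forall y, S y.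

Definition alg_morph (k : fieldType) (A B : algType k) (f : A -> B) : Prop :=
  [/\ f 1 = 1, (forall u v, f (u + v) = f u + f v),
      (forall u v, f (u * v) = f u * f v) & (forall c u, f (c *: u) = c *: f u)].

(* (A, e, x, tau) is the k-algebra presented by the generators
   e(nu) (nu in I^beta), x_1..x_n, tau_1..tau_{n-1} and the relations of
   R^Lambda(beta): the relations hold, the generators generate A, and A has
   the universal property w.r.t. any k-algebra with such elements. *)
Definition is_cycQH (k : fieldType) (I : finType) (a : I -> I -> int)
  (par : I -> bool) (t : I -> I -> nat -> nat -> k) (lamh : I -> nat)
  (m : nat) (alpha : I -> 'rV[int]_m) (beta : 'rV[int]_m) (n : nat)
  (A : algType k) (e : n.-tuple I -> A) (x : nat -> A) (tau : nat -> A) : Prop :=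
  [/\ cycQH_rels a par t lamh alpha beta e x tau,
      generated_by (fun g : A => (exists2 nu, Ibeta alpha beta nu & g = e nu)
                               \/ (exists2 p, (p < n)%N & g = x p)
                               \/ (exists2 a0, (a0.+1 < n)%N & g = tau a0)) &
      (forall (B : algType k) (e' : n.-tuple I -> B) (x' tau' : nat -> B),
         cycQH_rels a par t lamh alpha beta e' x' tau' ->
         exists f : A -> B, [/\ alg_morph f,
           (forall nu, Ibeta alpha beta nu -> f (e nu) = e' nu),
           (forall p, (p < n)%N -> f (x p) = x' p) &
           (forall a0, (a0.+1 < n)%N -> f (tau a0) = tau' a0)])].

(* z lies in  (+)_{mu in I^beta} P_mu e(mu) : a finite k-linear combination
   of elements x_1^{t_1} ... x_n^{t_n} e(mu), mu in I^beta *)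
Definition in_sum_Pe (k : fieldType) (I : finType) (m : nat)
  (alpha : I -> 'rV[int]_m) (beta : 'rV[int]_m) (n : nat)
  (A : algType k) (e : n.-tuple I -> A) (x : nat -> A) (z : A) : Prop :=
  exists (N : nat) (c : n.-tuple I -> n.-tuple 'I_N -> k),
    z = \sum_(mu | Ibeta alpha beta mu) \sum_(tt : n.-tuple 'I_N)
          c mu tt *: ((\prod_(p < n) x p ^+ tnth tt p) * e mu).

(* Since the j_s are pairwise distinct, every nu in I^beta is a permutation of
   js with distinct entries, so nu_a <> nu_(a+1) in all defining relations:
   tau_a moves past x_p up to a scalar, turning p into s_a p; tau_a^2 e(nu) is a
   polynomial in the x's; distant tau's commute up to sign and the braid
   relations hold on the nose.  By the exchange condition, R^Lambda(beta) e(mu)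
   is therefore spanned by the x^s tau_W e(mu) with W a reduced word.  A central
   z satisfies z e(mu) = e(mu) z e(mu), and
   e(mu) x^s tau_W e(mu) = x^s e(mu) e(W mu) tau_W vanishes unless W mu = mu,
   which for a reduced W and mu with distinct entries forces W = [::].  Hence
   z e(mu) lies in P_mu e(mu), and z is the sum of the z e(mu). *)

From HB Require Import structures.
From mathcomp Require Import all_boot all_order all_algebra.
From mathcomp Require Import perm zify.
Set Implicit Arguments.
Unset Strict Implicit.
Unset Printing Implicit Defensive.
Import Order.TTheory GRing.Theory Num.Theory.
Local Open Scope ring_scope.

Lemma onth_tnth (T : Type) n (s : n.-tuple T) (i : 'I_n) : onth s i = Some (tnth s i).
Proof. exact/tnth_onth. Qed.

Lemma swapnatK a : involutive (swapnat a).
Proof. by move=> p; rewrite /swapnat; repeat case: eqP; lia. Qed.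

Lemma swapnat_ltn n a p : (a.+1 < n)%N -> (swapnat a p < n)%N = (p < n)%N.
Proof. by move=> ha; rewrite /swapnat; repeat case: eqP; lia. Qed.

Lemma swapnat_id a p : p <> a -> p <> a.+1 -> swapnat a p = p.
Proof. by rewrite /swapnat; case: eqP => // _; case: eqP. Qed.

Lemma swapnat_l a : swapnat a a = a.+1. Proof. by rewrite /swapnat eqxx. Qed.
Lemma swapnat_r a : swapnat a a.+1 = a. Proof. by rewrite /swapnat eqxx; case: eqP; lia. Qed.
Lemma swapnat_below a : swapnat a.+1 a = a. Proof. by rewrite swapnat_id; lia. Qed.
Lemma swapnat_above a : swapnat a a.+2 = a.+2. Proof. by rewrite swapnat_id; lia. Qed.
Definition swapnatE := (swapnat_l, swapnat_r, swapnat_below, swapnat_above).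

Lemma onth_tswap (T : Type) n a (nu : n.-tuple T) p : (a.+1 < n)%N ->
  onth (tswap a nu) p = onth nu (swapnat a p).
Proof.
move=> ha; have [hp | hp] := ltnP p n; last first.
  have hs : (n <= swapnat a p)%N by rewrite leqNgt swapnat_ltn // -leqNgt.
  by rewrite !onth_default ?size_tuple.
have hs : (swapnat a p < n)%N by rewrite swapnat_ltn.
rewrite (onth_tnth _ (Ordinal hp)) (onth_tnth _ (Ordinal hs)) tnth_mktuple.
by congr (Some (tnth _ _)); apply: val_inj; rewrite val_insubd hs.
Qed.

Lemma perm_tswap (T : eqType) n a (nu : n.-tuple T) : (a.+1 < n)%N ->
  perm_eq (tswap a nu) nu.
Proof.
move=> ha; pose f (k : 'I_n) : 'I_n := insubd k (swapnat a k).
have val_f k : val (f k) = swapnat a k by rewrite val_insubd swapnat_ltn ?ltn_ord.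
have f_inj : injective f.
  by move=> k l /(congr1 val); rewrite !val_f => /(can_inj (swapnatK a))/val_inj.
by apply/tuple_permP; exists (perm f_inj); congr val; apply: eq_mktuple => k; rewrite permE.
Qed.

Lemma tswapC (T : Type) n a b (nu : n.-tuple T) : (a.+1 < n)%N -> (b.+1 < n)%N ->
  (a.+1 < b)%N || (b.+1 < a)%N -> tswap a (tswap b nu) = tswap b (tswap a nu).
Proof.
move=> ha hb /orP hab; apply/val_inj/eq_from_onth => p.
by rewrite !onth_tswap //; congr onth; rewrite /swapnat; repeat case: eqP; lia.
Qed.

Lemma tswap_braid (T : Type) n a b (nu : n.-tuple T) : (a.+1 < n)%N -> (b.+1 < n)%N ->
  b = a.+1 \/ a = b.+1 ->
  tswap a (tswap b (tswap a nu)) = tswap b (tswap a (tswap b nu)).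
Proof.
move=> ha hb hab; apply/val_inj/eq_from_onth => p.
by rewrite !onth_tswap //; congr onth; rewrite /swapnat; repeat case: eqP; lia.
Qed.

(* [permute mu W] applies to [mu] the swaps of [W], the rightmost first; [W] is
   [reduced] when each swap creates a new inversion with respect to the order of
   the letters of [mu], i.e. [W] is a reduced word. *)
Definition rank_in (I : eqType) n (mu nu : n.-tuple I) p :=
  index (onth nu p) (map Some mu).

Definition descent (I : eqType) n (mu nu : n.-tuple I) b :=
  (rank_in mu nu b.+1 < rank_in mu nu b)%N.

Fixpoint permute (I : Type) n (mu : n.-tuple I) (W : seq nat) : n.-tuple I :=
  if W is b :: W' then tswap b (permute mu W') else mu.

Fixpoint reduced (I : eqType) n (mu : n.-tuple I) (W : seq nat) : bool :=
  if W is b :: W' then [&& (b.+1 < n)%N, reduced mu W' & ~~ descent mu (permute mu W') b]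
  else true.

Section ReducedWords.
Variables (I : eqType) (n : nat) (mu : n.-tuple I).
Hypothesis mu_uniq : uniq mu.

Local Notation rank_in := (rank_in mu).
Local Notation descent := (descent mu).
Local Notation permute := (permute mu).
Local Notation reduced := (reduced mu).

Lemma rank_in_tswap (nu : n.-tuple I) b p : (b.+1 < n)%N ->
  rank_in (tswap b nu) p = rank_in nu (swapnat b p).
Proof. by move=> hb; rewrite /rank_in onth_tswap. Qed.

Lemma rank_in_inj (nu : n.-tuple I) p q : perm_eq nu mu -> (p < n)%N -> (q < n)%N ->
  rank_in nu p = rank_in nu q -> p = q.
Proof.
move=> nu_mu hp hq.
have mem_mu r : (r < n)%N -> onth nu r \in map Some mu.
  move=> hr; rewrite (onth_tnth nu (Ordinal hr)) (mem_map (@Some_inj _)).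
  by rewrite -(perm_mem nu_mu) mem_tnth.
move=> /(congr1 (nth None (map Some mu))); rewrite !nth_index ?mem_mu //.
by apply: onth_inj; rewrite ?(perm_uniq nu_mu) // size_tuple; lia.
Qed.

Lemma rank_in_id p : (p < n)%N -> rank_in mu p = p.
Proof.
move=> hp; rewrite /rank_in onthE index_uniq ?size_map ?size_tuple //.
by rewrite map_inj_uniq // => ? ? [].
Qed.

Lemma perm_permute W : all (fun b => b.+1 < n)%N W -> perm_eq (permute W) mu.
Proof.
elim: W => [|b W IH] /=; first by rewrite perm_refl.
by case/andP=> hb hW; rewrite (perm_trans (perm_tswap _ hb)) ?IH.
Qed.

Lemma reduced_bounded W : reduced W -> all (fun b => b.+1 < n)%N W.
Proof. by elim: W => //= b W IH /and3P[-> /IH -> _]. Qed.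

Lemma reduced_descent b W : reduced (b :: W) -> descent (permute (b :: W)) b.
Proof.
case/and3P=> hb hW; rewrite /descent /= !rank_in_tswap // !swapnatE -leqNgt.
rewrite leq_eqVlt => /orP[/eqP|] //.
by move/(rank_in_inj (perm_permute (reduced_bounded hW)) (ltnW hb) hb); lia.
Qed.

Lemma reduced_permute_id W : reduced W -> permute W = mu -> W = [::].
Proof.
case: W => // b W red_bW perm_bW; have := reduced_descent red_bW.
case/andP: red_bW => hb _; rewrite perm_bW /descent !rank_in_id //; [lia | exact: ltnW].
Qed.

End ReducedWords.

Inductive lspan (R : pzRingType) (V : lmodType R) (P : V -> Prop) : V -> Prop :=
| lspan0 : lspan P 0
| lspan_gen g : P g -> lspan P g
| lspanD u v : lspan P u -> lspan P v -> lspan P (u + v)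
| lspanZ c u : lspan P u -> lspan P (c *: u).

Section LinearSpan.
Variables (R : pzRingType) (V W : lmodType R).

Lemma lspan_sum (P : V -> Prop) (J : Type) (r : seq J) (Q : pred J) (F : J -> V) :
  (forall j, Q j -> lspan P (F j)) -> lspan P (\sum_(j <- r | Q j) F j).
Proof. by move=> PF; apply: big_ind => //; [exact: lspan0 | exact: lspanD]. Qed.

Lemma lspan_map (P : V -> Prop) (Q : W -> Prop) (f : V -> W) :
  (forall u v, f (u + v) = f u + f v) -> (forall c u, f (c *: u) = c *: f u) ->
  (forall g, P g -> lspan Q (f g)) -> forall v, lspan P v -> lspan Q (f v).
Proof.
move=> fD fZ fP v; elim=> [|g /fP //|u w _ Qu _ Qw|c u _ Qu].
- by rewrite -(scale0r (0 : V)) fZ scale0r; apply: lspan0.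
- by rewrite fD; apply: lspanD.
- by rewrite fZ; apply: lspanZ.
Qed.

End LinearSpan.

Lemma lspan_sub (R : pzRingType) (V : lmodType R) (P Q : V -> Prop) :
  (forall g, P g -> lspan Q g) -> forall v, lspan P v -> lspan Q v.
Proof. exact: (@lspan_map _ _ _ P Q id). Qed.

Lemma lspan_mull (R : comPzRingType) (A : algType R) (P Q : A -> Prop) (y : A) :
  (forall g, P g -> lspan Q (y * g)) -> forall v, lspan P v -> lspan Q (y * v).
Proof. by apply: (lspan_map (f := *%R y)) => [u v|c u]; rewrite ?mulrDr ?scalerAr. Qed.

Section SpanningSet.
Variables (k : fieldType) (A : algType k) (I : eqType) (n : nat).
Variables (Ib : pred (n.-tuple I)) (e : n.-tuple I -> A) (x tau : nat -> A).

Definition xprod (s : seq nat) := \prod_(p <- s) x p.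
Definition tprod (W : seq nat) := \prod_(b <- W) tau b.
Definition is_xpoly := lspan (fun g => exists2 s, all (fun p => p < n)%N s & g = xprod s).

Hypothesis Ib_tswap : forall nu a, Ib nu -> (a.+1 < n)%N -> Ib (tswap a nu).
Hypothesis Ib_uniq : forall nu, Ib nu -> uniq nu.
Hypothesis e_mul : forall mu nu, Ib mu -> Ib nu -> e mu * e nu = if mu == nu then e nu else 0.
Hypothesis x_e : forall nu p, Ib nu -> (p < n)%N -> x p * e nu = e nu * x p.
Hypothesis tau_e : forall nu a, Ib nu -> (a.+1 < n)%N -> tau a * e nu = e (tswap a nu) * tau a.
Hypothesis tau_x : forall nu a p, Ib nu -> (a.+1 < n)%N -> (p < n)%N ->
  exists c, tau a * x p * e nu = c *: (x (swapnat a p) * tau a * e nu).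
Hypothesis tau_sq : forall nu a, Ib nu -> (a.+1 < n)%N ->
  exists2 F, is_xpoly F & tau a * tau a * e nu = F * e nu.
Hypothesis tau_far : forall nu a b, Ib nu -> (a.+1 < n)%N -> (b.+1 < n)%N ->
  (a.+1 < b)%N || (b.+1 < a)%N -> exists c, tau a * tau b * e nu = c *: (tau b * tau a * e nu).
Hypothesis tau_braid : forall nu a b, Ib nu -> (a.+1 < n)%N -> (b.+1 < n)%N ->
  b = a.+1 \/ a = b.+1 -> tau a * tau b * tau a * e nu = tau b * tau a * tau b * e nu.
Hypothesis generated : generated_by (fun g : A =>
  (exists2 nu, Ib nu & g = e nu) \/ (exists2 p, (p < n)%N & g = x p) \/
  (exists2 a, (a.+1 < n)%N & g = tau a)).

Lemma e_idem nu : Ib nu -> e nu * e nu = e nu.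
Proof. by move=> Inu; rewrite e_mul // eqxx. Qed.

Lemma xprod_e s nu : Ib nu -> all (fun p => p < n)%N s -> xprod s * e nu = e nu * xprod s.
Proof.
move=> Inu /allP s_n; apply/esym; rewrite /xprod big_seq.
by apply: commr_prod => p /s_n p_n; apply/esym/x_e.
Qed.

Lemma Ib_permute mu W : Ib mu -> all (fun b => b.+1 < n)%N W -> Ib (permute mu W).
Proof. by move=> Imu; elim: W => //= b W IH /andP[hb /IH Iw]; apply: Ib_tswap. Qed.

Lemma tprod_e mu W : Ib mu -> all (fun b => b.+1 < n)%N W ->
  tprod W * e mu = e (permute mu W) * tprod W.
Proof.
move=> Imu; elim: W => [|b W IH] /=; first by rewrite /tprod big_nil mul1r mulr1.
case/andP=> hb hW; rewrite /tprod big_cons -mulrA IH // mulrA tau_e //.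
  by rewrite -mulrA.
exact: Ib_permute.
Qed.

Lemma tprod_eK mu W : Ib mu -> all (fun b => b.+1 < n)%N W ->
  e (permute mu W) * (tprod W * e mu) = tprod W * e mu.
Proof. by move=> Imu hW; rewrite tprod_e // mulrA e_idem // Ib_permute. Qed.

Lemma tau_xprod a s nu : (a.+1 < n)%N -> Ib nu -> all (fun p => p < n)%N s ->
  exists c, tau a * xprod s * e nu = c *: (xprod (map (swapnat a) s) * tau a * e nu).
Proof.
move=> ha Inu; elim: s => [|p s IH] /=.
  by exists 1; rewrite scale1r /xprod !big_nil mulr1 mul1r.
case/andP=> hp hs; have [c1 IHc] := IH hs; have [c2 tau_xp] := tau_x Inu ha hp.
exists (c2 * c1); rewrite /xprod !big_cons -!/(xprod _) !mulrA.
rewrite -(mulrA _ (xprod s)) xprod_e // mulrA tau_xp -!scalerAl -(mulrA _ (e nu)) -xprod_e //.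
by rewrite -(mulrA (x _)) -(mulrA (x _)) (mulrA (tau a)) IHc -scalerAr scalerA !mulrA.
Qed.

(* The exchange condition: a descent of [permute mu W] can be moved to the
   front of the reduced word [W]. *)
Definition exchange_witness mu W a := exists c W',
  [/\ size W = (size W').+1, reduced mu (a :: W'), permute mu (a :: W') = permute mu W
    & tprod W * e mu = c *: (tau a * tprod W' * e mu)].

Definition exchange_upto N := forall mu W a, Ib mu -> (size W <= N)%N -> reduced mu W ->
  (a.+1 < n)%N -> descent mu (permute mu W) a -> exchange_witness mu W a.

Lemma exchange_far N mu a b W : exchange_upto N -> Ib mu -> (size W <= N)%N ->
  reduced mu (b :: W) -> (a.+1 < n)%N -> (a.+1 < b)%N || (b.+1 < a)%N ->
  descent mu (permute mu (b :: W)) a -> exchange_witness mu (b :: W) a.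
Proof.
move=> IH Imu hN /= /and3P[hb redW not_desc_b] ha far desc_a.
have [sa sa1 sb sb1] : [/\ swapnat b a = a, swapnat b a.+1 = a.+1,
    swapnat a b = b & swapnat a b.+1 = b.+1] by split; apply: swapnat_id; lia.
have desc_aW : descent mu (permute mu W) a.
  by move: desc_a; rewrite /descent /= !rank_in_tswap // sa sa1.
have [c1 [W' [sizeW red_aW' perm_aW' tprodW]]] := IH mu W a Imu hN redW ha desc_aW.
have /= /and3P[_ redW' not_desc_a] := red_aW'.
have boundW' := reduced_bounded redW'.
have far' : ((b.+1 < a) || (a.+1 < b))%N by rewrite orbC.
have [c2 tau_ba] := tau_far (Ib_permute Imu boundW') hb ha far'.
exists (c1 * c2), (b :: W'); split => /=.
- by rewrite sizeW.
- rewrite ha hb redW' /descent !rank_in_tswap // sa sa1 not_desc_a /=.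
  by move: not_desc_b; rewrite -perm_aW' /descent /= !rank_in_tswap // sb sb1 andbT.
- by rewrite -perm_aW' /= tswapC.
rewrite /tprod !big_cons -!/(tprod _) -mulrA tprodW -scalerAr !mulrA -scalerA.
congr (_ *: _); rewrite -!mulrA -(tprod_eK Imu boundW') !mulrA tau_ba -!scalerAl.
by rewrite -!mulrA tprod_eK.
Qed.

Lemma exchange_adjacent N mu a b W : exchange_upto N -> Ib mu -> (size W <= N)%N ->
  reduced mu (b :: W) -> (a.+1 < n)%N -> b = a.+1 \/ a = b.+1 ->
  descent mu (permute mu (b :: W)) a -> exchange_witness mu (b :: W) a.
Proof.
move=> IH Imu hN red_bW ha adj desc_a.
have desc_b := reduced_descent (Ib_uniq Imu) red_bW.
move: red_bW => /= /and3P[hb redW not_desc_b].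
have desc_aW : descent mu (permute mu W) a.
  move: desc_a desc_b not_desc_b; rewrite /descent /= !rank_in_tswap //.
  by case: adj => ->; rewrite ?swapnatE; lia.
have [c1 [W1 [sizeW red_aW1 perm_aW1 tprodW]]] := IH mu W a Imu hN redW ha desc_aW.
have /= /and3P[_ redW1 not_desc_a1] := red_aW1.
have desc_bW1 : descent mu (permute mu W1) b.
  move: desc_a desc_b not_desc_b; rewrite /descent /= -perm_aW1 /= !rank_in_tswap //.
  by case: adj => ->; rewrite ?swapnatE; lia.
have hN1 : (size W1 <= N)%N by lia.
have [c2 [W2 [sizeW1 red_bW2 perm_bW2 tprodW1]]] := IH mu W1 b Imu hN1 redW1 hb desc_bW1.
have /= /and3P[_ redW2 not_desc_b2] := red_bW2.
have boundW2 := reduced_bounded redW2.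
exists (c1 * c2), (b :: a :: W2); split => /=.
- by rewrite sizeW sizeW1.
- rewrite ha hb redW2 /=.
  move: desc_a desc_b not_desc_b not_desc_a1 not_desc_b2.
  rewrite /descent /= -perm_aW1 /= -perm_bW2 /= !rank_in_tswap //.
  by case: adj => ->; rewrite ?swapnatE; lia.
- by rewrite -perm_aW1 /= -perm_bW2 /= tswap_braid.
rewrite /tprod !big_cons -!/(tprod _) -mulrA tprodW -scalerAr !mulrA.
rewrite -(mulrA _ (tprod W1)) tprodW1 -scalerAr scalerA !mulrA; congr (_ *: _).
by rewrite -!mulrA -(tprod_eK Imu boundW2) !mulrA tau_braid ?Ib_permute // -!mulrA.
Qed.

Lemma exchange N : exchange_upto N.
Proof.
elim: N => [|N IH] mu [|b W] a Imu //= hN redW ha desc_a.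
1,2: by move: desc_a; rewrite /descent !rank_in_id ?Ib_uniq //; lia.
have [<-|neq_ba] := eqVneq b a; first by exists 1, W; split; rewrite // /tprod big_cons scale1r.
have [far|near] := boolP ((a.+1 < b) || (b.+1 < a))%N.
  exact: exchange_far IH Imu hN redW ha far desc_a.
by apply: exchange_adjacent IH Imu hN redW ha _ desc_a; lia.
Qed.

Definition normal_word mu (g : A) := exists s W,
  [/\ all (fun p => p < n)%N s, reduced mu W & g = xprod s * tprod W * e mu].

Lemma x_mul_normal mu p g : (p < n)%N -> normal_word mu g ->
  lspan (normal_word mu) (x p * g).
Proof.
move=> hp [s [W [hs redW ->]]]; apply: lspan_gen; exists (p :: s), W.
by rewrite /= hp /xprod big_cons !mulrA.
Qed.

Lemma e_mul_normal mu nu g : Ib mu -> Ib nu -> normal_word mu g ->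
  lspan (normal_word mu) (e nu * g).
Proof.
move=> Imu Inu [s [W [hs redW ->]]]; have bW := reduced_bounded redW.
rewrite !mulrA -xprod_e // -!mulrA tprod_e // (mulrA (e nu)) e_mul ?Ib_permute //.
case: eqP => _; last by rewrite !(mul0r, mulr0); apply: lspan0.
by rewrite -tprod_e // mulrA; apply: lspan_gen; exists s, W.
Qed.

Lemma xpoly_mul_normal mu s W F : is_xpoly F -> all (fun p => p < n)%N s ->
  reduced mu W -> lspan (normal_word mu) (xprod s * F * (tprod W * e mu)).
Proof.
move=> xpolyF hs redW; move: F xpolyF.
apply: (lspan_map (f := fun F => xprod s * F * (tprod W * e mu))) => [u v|c u|_ [s' hs' ->]].
- by rewrite mulrDr mulrDl.
- by rewrite -scalerAr -scalerAl.
apply: lspan_gen; exists (s ++ s'), W; rewrite all_cat hs hs'.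
by rewrite /xprod big_cat !mulrA.
Qed.

Lemma tau_mul_normal mu a g : Ib mu -> (a.+1 < n)%N -> normal_word mu g ->
  lspan (normal_word mu) (tau a * g).
Proof.
move=> Imu ha [s [W [hs redW ->]]]; have bW := reduced_bounded redW.
have [c tau_s] := tau_xprod ha (Ib_permute Imu bW) hs.
have hs' : all (fun p => p < n)%N (map (swapnat a) s).
  by rewrite all_map; apply/allP => p /(allP hs) hp /=; rewrite swapnat_ltn.
rewrite -!mulrA -(tprod_eK Imu bW) !mulrA tau_s -!scalerAl -!mulrA tprod_eK //.
apply: lspanZ; have [desc_a | not_desc_a] := boolP (descent mu (permute mu W) a).
  have [c' [W' [_ red_aW' _ tprodW]]] := exchange Imu (leqnn _) redW ha desc_a.
  have /= /and3P[_ redW' _] := red_aW'; have bW' := reduced_bounded redW'.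
  have [F xpolyF tau_sq_F] := tau_sq (Ib_permute Imu bW') ha.
  rewrite tprodW -!scalerAr; apply: lspanZ.
  have -> : tau a * (tau a * tprod W' * e mu) = F * (tprod W' * e mu).
    by rewrite -mulrA -(tprod_eK Imu bW') !mulrA tau_sq_F.
  by rewrite mulrA; apply: xpoly_mul_normal.
apply: lspan_gen; exists (map (swapnat a) s), (a :: W).
by rewrite /= ha redW not_desc_a /tprod big_cons !mulrA.
Qed.

Lemma normal_word_span mu y : Ib mu -> lspan (normal_word mu) (y * e mu).
Proof.
have mul_span : forall y nu, Ib nu -> forall w,
    lspan (normal_word nu) w -> lspan (normal_word nu) (y * w).
  apply: generated => [nu _ w|u v Su Sv nu Inu w|u v Su Sv nu Inu w|c u Su nu Inu w|].
  - by rewrite mul1r.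
  - by move=> Sw; rewrite mulrDl; apply: lspanD; [exact: Su | exact: Sv].
  - by move=> Sw; rewrite -mulrA; apply: Su => //; apply: Sv.
  - by move=> Sw; rewrite -scalerAl; apply/lspanZ/Su.
  move=> _ [[nu' Inu' ->]|[[p hp ->]|[a ha ->]]] nu Inu; apply: lspan_mull => g.
  - exact: e_mul_normal.
  - exact: x_mul_normal.
  - exact: tau_mul_normal.
move=> Imu; apply: mul_span Imu _ (lspan_gen _).
by exists [::], [::]; rewrite /xprod /tprod !big_nil !mul1r.
Qed.

Definition x_monomial mu (g : A) := exists2 s, all (fun p => p < n)%N s & g = xprod s * e mu.

Lemma e_mul_normal_span mu w : Ib mu -> lspan (normal_word mu) w ->
  lspan (x_monomial mu) (e mu * w).
Proof.
move=> Imu; apply: lspan_mull => _ [s [W [hs redW ->]]]; have bW := reduced_bounded redW.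
rewrite !mulrA -xprod_e // -!mulrA tprod_e // (mulrA (e mu)) e_mul ?Ib_permute //.
case: eqP => [perm_W | _]; last by rewrite !(mul0r, mulr0); apply: lspan0.
rewrite (reduced_permute_id (Ib_uniq Imu) redW (esym perm_W)) /tprod big_nil mulr1.
by apply: lspan_gen; exists s.
Qed.

Lemma central_mul_e_span z mu : Ib mu -> (forall y, z * y = y * z) ->
  lspan (x_monomial mu) (z * e mu).
Proof.
move=> Imu zC; have -> : z * e mu = e mu * (z * e mu) by rewrite mulrA -zC -mulrA e_idem.
exact/e_mul_normal_span/normal_word_span.
Qed.

End SpanningSet.

Section Monomials.
Variables (k : fieldType) (A : algType k) (n : nat) (x : nat -> A) (em : A).
Hypothesis x_em : forall p, (p < n)%N -> x p * em = em * x p.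
Hypothesis x_x_em : forall p q, (p < n)%N -> (q < n)%N -> p != q ->
  exists c, x p * x q * em = c *: (x q * x p * em).

Definition xmono (t : 'I_n -> nat) := \prod_(p < n) x p ^+ t p.

Lemma xpow_em p r : (p < n)%N -> x p ^+ r * em = em * x p ^+ r.
Proof. by move=> hp; apply/esym/commrX/esym/x_em. Qed.

Lemma x_mul_xpow p q r : (p < n)%N -> (q < n)%N -> p != q ->
  exists c, x q * x p ^+ r * em = c *: (x p ^+ r * x q * em).
Proof.
move=> hp hq neq_pq; elim: r => [|r [c2 IH]].
  by exists 1; rewrite scale1r !expr0 mulr1 mul1r.
have neq_qp : q != p by rewrite eq_sym.
have [c1 x_qp] := x_x_em hq hp neq_qp.
exists (c1 * c2).
rewrite exprS mulrA -(mulrA _ (x p ^+ r)) xpow_em // mulrA x_qp -scalerAl -scalerA.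
by congr (_ *: _); rewrite -!mulrA -xpow_em // (mulrA (x q)) IH -!scalerAr !mulrA.
Qed.

Lemma x_mul_xpow_prod (L : seq 'I_n) t (q : 'I_n) : uniq L -> q \in L ->
  exists c, x q * \prod_(p <- L) x p ^+ t p * em =
            c *: (\prod_(p <- L) x p ^+ (t p + (p == q)) * em).
Proof.
have prod_em (L' : seq 'I_n) (t' : 'I_n -> nat) :
    (\prod_(p <- L') x p ^+ t' p) * em = em * \prod_(p <- L') x p ^+ t' p.
  by apply/esym/commr_prod => p _; rewrite /GRing.comm xpow_em.
elim: L => [|p L IH] //= /andP[p_L uL]; rewrite in_cons.
have [-> _ |neq_qp /= q_L] := eqVneq q p.
  exists 1; rewrite scale1r !big_cons eqxx addn1 exprS mulrA.
  congr (_ * _ * _); apply: eq_big_seq => p' p'_L.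
  have /negbTE-> : p' != p by apply: contraNneq p_L => <-.
  by rewrite addn0.
have [c1 IHc] := IH uL q_L.
have neq_pq : (p : nat) != q by apply: contra_neq neq_qp => /val_inj ->.
have [c2 x_q_p] := x_mul_xpow (t p) (ltn_ord p) (ltn_ord q) neq_pq.
exists (c2 * c1); rewrite !big_cons [p == q]eq_sym (negbTE neq_qp) addn0.
rewrite mulrA -(mulrA _ (\prod_(_ <- _) _)) prod_em mulrA x_q_p -!scalerAl -scalerA.
by congr (_ *: _); rewrite -!mulrA -prod_em (mulrA (x q)) IHc -!scalerAr prod_em !mulrA.
Qed.

Lemma xprod_xmono s : all (fun p => p < n)%N s ->
  exists c t, xprod x s * em = c *: (xmono t * em).
Proof.
elim: s => [|p s IH] /=.
  exists 1, (fun _ => 0%N); rewrite scale1r /xprod /xmono big_nil.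
  by rewrite big1 // => i _; rewrite expr0.
case/andP=> hp /IH[c [t xprod_s]].
have [c' x_mono] := x_mul_xpow_prod t (index_enum_uniq 'I_n) (mem_index_enum (Ordinal hp)).
exists (c * c'), (fun i => t i + (i == Ordinal hp))%N.
rewrite /xprod big_cons -/(xprod x s) -mulrA xprod_s -scalerAr mulrA -scalerA.
by congr (_ *: _); exact: x_mono.
Qed.

End Monomials.

Section SumOfPe.
Variables (k : fieldType) (I : finType) (m : nat) (alpha : I -> 'rV[int]_m).
Variables (beta : 'rV[int]_m) (n : nat) (A : algType k).
Variables (e : n.-tuple I -> A) (x : nat -> A).

Definition Pe_monomial (g : A) :=
  exists mu (t : 'I_n -> nat), Ibeta alpha beta mu /\ g = xmono x t * e mu.

Definition Pe_sum N (c : n.-tuple I -> n.-tuple 'I_N -> k) :=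
  \sum_(mu | Ibeta alpha beta mu) \sum_(tt : n.-tuple 'I_N)
     c mu tt *: ((\prod_(p < n) x p ^+ tnth tt p) * e mu).

Lemma Pe_sum_monomial mu (t : 'I_n -> nat) : Ibeta alpha beta mu ->
  exists N0, forall N, (N0 <= N)%N -> exists c, xmono x t * e mu = Pe_sum (N := N) c.
Proof.
move=> Imu; exists (\max_(p < n) t p).+1 => N hN.
have t_N p : (t p < N)%N by apply: leq_trans hN; rewrite ltnS (leq_bigmax_cond (F := t)).
pose tt0 : n.-tuple 'I_N := [tuple Ordinal (t_N p) | p < n].
exists (fun nu tt => ((nu == mu) && (tt == tt0))%:R).
rewrite /Pe_sum (bigD1 mu) //= (bigD1 tt0) //= !eqxx scale1r.
rewrite [X in _ + X + _]big1 => [|tt /negbTE->]; last by rewrite andbF scale0r.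
rewrite [X in _ + X]big1 => [|nu /andP[_ /negbTE->]]; last first.
  by rewrite big1 // => tt _; rewrite scale0r.
by rewrite !addr0; congr (_ * _); apply: eq_bigr => p _; rewrite tnth_mktuple.
Qed.

Lemma lspan_in_sum_Pe z : lspan Pe_monomial z -> in_sum_Pe alpha beta e x z.
Proof.
move=> span_z.
suff [N0 rep] : exists N0, forall N, (N0 <= N)%N -> exists c, z = Pe_sum (N := N) c.
  by have [c ->] := rep N0 (leqnn _); exists N0, c.
elim: span_z => [|_ [mu [t [Imu ->]]]|u v _ [N1 rep_u] _ [N2 rep_v]|a u _ [N1 rep_u]].
- exists 0%N => N _; exists (fun _ _ => 0).
  by rewrite /Pe_sum big1 // => mu _; rewrite big1 // => tt _; rewrite scale0r.
- exact: Pe_sum_monomial.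
- exists (maxn N1 N2) => N; rewrite geq_max => /andP[/rep_u[c1 ->] /rep_v[c2 ->]].
  exists (fun mu tt => c1 mu tt + c2 mu tt); rewrite /Pe_sum -big_split.
  by apply: eq_bigr => mu _; rewrite -big_split; apply: eq_bigr => tt _; rewrite scalerDl.
- exists N1 => N /rep_u[c ->]; exists (fun mu tt => a * c mu tt).
  rewrite /Pe_sum scaler_sumr; apply: eq_bigr => mu _.
  by rewrite scaler_sumr; apply: eq_bigr => tt _; rewrite scalerA.
Qed.

End SumOfPe.

Lemma sum_count_mem (I : finType) (V : nmodType) (F : I -> V) (s : seq I) :
  \sum_(i <- s) F i = \sum_(i : I) F i *+ count_mem i s.
Proof.
elim: s => [|y s IH]; first by rewrite big_nil big1 // => i _; rewrite mulr0n.
rewrite big_cons IH /=; under [RHS]eq_bigr do rewrite mulrnDr.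
rewrite big_split /=; congr (_ + _); rewrite (bigD1 y) //= eqxx mulr1n big1 ?addr0 //.
by move=> i /negbTE; rewrite eq_sym => ->; rewrite mulr0n.
Qed.

Lemma perm_eq_of_indep (I : finType) (V : lmodType int) (alpha : I -> V) (s1 s2 : seq I) :
  (forall c : I -> int, \sum_(i : I) c i *: alpha i = 0 -> forall i, c i = 0) ->
  \sum_(i <- s1) alpha i = \sum_(i <- s2) alpha i -> perm_eq s1 s2.
Proof.
move=> indep; rewrite !(sum_count_mem alpha) => eq_sums.
have sum_diff : \sum_(i : I) ((count_mem i s1)%:Z - (count_mem i s2)%:Z) *: alpha i = 0.
  rewrite (eq_bigr (fun i => alpha i *+ count_mem i s1 - alpha i *+ count_mem i s2)).
    by rewrite sumrB eq_sums subrr.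
  by move=> i _; rewrite scalerBl -!scaler_nat !natz.
by apply/allP => i _ /=; apply/eqP; have /eqP := indep _ sum_diff i; rewrite subr_eq0 => /eqP[].
Qed.

Lemma Ibeta_tswap (I : eqType) m n (alpha : I -> 'rV[int]_m) beta (nu : n.-tuple I) a :
  Ibeta alpha beta nu -> (a.+1 < n)%N -> Ibeta alpha beta (tswap a nu).
Proof. by move=> Inu ha; rewrite /Ibeta (perm_big _ (perm_tswap nu ha)). Qed.

Lemma mul_sgn_sgn (R : pzRingType) b : sgn R b * sgn R b = 1.
Proof. by case: b; rewrite /sgn ?mulrNN mulr1. Qed.

Section CyclotomicQuotient.
Variables (k : fieldType) (I : finType) (a : I -> I -> int) (par : I -> bool).
Variables (t : I -> I -> nat -> nat -> k) (lamh : I -> nat) (m : nat).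
Variables (alpha : I -> 'rV[int]_m) (beta : 'rV[int]_m) (n : nat) (A : algType k).
Variables (e : n.-tuple I -> A) (x tau : nat -> A).
Hypothesis rels : cycQH_rels a par t lamh alpha beta e x tau.
Local Notation Ib := (@Ibeta I m n alpha beta).
Hypothesis Ib_uniq : forall nu, Ib nu -> uniq nu.

Lemma Ib_onth_neq nu p q : Ib nu -> (p < n)%N -> (q < n)%N -> p != q ->
  onth nu p != onth nu q.
Proof.
move=> Inu hp hq; apply: contra_neq => eq_pq.
by apply: (onth_inj nu p q) => //; rewrite ?Ib_uniq ?size_tuple //; lia.
Qed.

Lemma rels_tau_x nu b p : Ib nu -> (b.+1 < n)%N -> (p < n)%N ->
  exists c, tau b * x p * e nu = c *: (x (swapnat b p) * tau b * e nu).
Proof.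
have [_ [_ [_ [_ [_ [tau_x [tau_adj _]]]]]]] := rels.
move=> Inu hb hp; have [tau_x1 x1_tau] := tau_adj nu b Inu hb.
have neq_b : b != b.+1 by rewrite ltn_eqF.
have /negbTE distinct := Ib_onth_neq Inu (ltnW hb) hb neq_b.
move: tau_x1 x1_tau; rewrite distinct !mulrBl -!scalerAl => /eqP + /eqP.
rewrite !subr_eq0 => /eqP tau_x1 /eqP x1_tau.
set s := sgn k _ in tau_x1 x1_tau.
have [-> | neq_pb] := eqVneq p b.
  by exists s; rewrite swapnat_l x1_tau scalerA mul_sgn_sgn scale1r.
have [-> | neq_pb1] := eqVneq p b.+1; first by exists s; rewrite swapnat_r.
by rewrite swapnat_id; [eexists; apply: tau_x | apply/eqP | apply/eqP].
Qed.

Lemma rels_tau_sq nu b : Ib nu -> (b.+1 < n)%N ->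
  exists2 F, is_xpoly n x F & tau b * tau b * e nu = F * e nu.
Proof.
have [_ [_ [_ [_ [_ [_ [_ [tau_sq _]]]]]]]] := rels.
move=> Inu hb; have hb' : (b < n)%N by apply: ltnW.
have xprod_nseq r p : xprod x (nseq r p) = x p ^+ r by rewrite /xprod big_nseq iter_mulr_1.
set i := tnth nu (Ordinal hb'); set j := tnth nu (Ordinal hb).
exists (Qpol a t i j (x b) (x b.+1)); last first.
  by rewrite -expr2; apply: tau_sq (onth_tnth nu (Ordinal hb')) (onth_tnth nu (Ordinal hb)).
apply: lspan_sum => r _; apply: lspan_sum => s _; apply/lspanZ/lspan_gen.
exists (nseq r b ++ nseq s b.+1); first by rewrite all_cat !all_nseq hb hb' !orbT.
by rewrite /xprod big_cat -!/(xprod _ _) !xprod_nseq.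
Qed.

Lemma rels_tau_braid nu b c : Ib nu -> (b.+1 < n)%N -> (c.+1 < n)%N ->
  c = b.+1 \/ b = c.+1 -> tau b * tau c * tau b * e nu = tau c * tau b * tau c * e nu.
Proof.
have [_ [_ [_ [_ [_ [_ [_ [_ [_ [braid _]]]]]]]]]] := rels.
have braid_up nu' b' : Ib nu' -> (b'.+2 < n)%N ->
    tau b'.+1 * tau b' * tau b'.+1 * e nu' = tau b' * tau b'.+1 * tau b' * e nu'.
  move=> Inu' hb'; have hb'0 : (b' < n)%N by lia.
  have hb'1 : (b'.+1 < n)%N by lia.
  have := braid nu' b' _ _ Inu' hb' (onth_tnth nu' (Ordinal hb'0)) (onth_tnth nu' (Ordinal hb'1)).
  have neq : b'.+2 != b' by rewrite gtn_eqF.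
  rewrite -(onth_tnth nu' (Ordinal hb'0)) (negbTE (Ib_onth_neq Inu' hb' hb'0 neq)) mulrBl.
  by move/eqP; rewrite subr_eq0 => /eqP.
by move=> Inu hb hc [eq_c | eq_b]; [subst c; symmetry | subst b]; apply: braid_up.
Qed.

Hypothesis generated : generated_by (fun g : A =>
  (exists2 nu, Ib nu & g = e nu) \/ (exists2 p, (p < n)%N & g = x p) \/
  (exists2 b, (b.+1 < n)%N & g = tau b)).

Lemma central_mul_e_Pe z mu : Ib mu -> (forall y, z * y = y * z) ->
  lspan (Pe_monomial alpha beta e x) (z * e mu).
Proof.
have [e_mul [_ [x_x [x_e [tau_e [_ [_ [_ [tau_far _]]]]]]]]] := rels.
move=> Imu zC.
have x_x_e p q : (p < n)%N -> (q < n)%N -> p != q ->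
    exists c, x p * x q * e mu = c *: (x q * x p * e mu).
  by move=> hp hq neq_pq; eexists; apply: x_x.
have tau_far_e nu b c : Ib nu -> (b.+1 < n)%N -> (c.+1 < n)%N ->
    (b.+1 < c)%N || (c.+1 < b)%N -> exists c', tau b * tau c * e nu = c' *: (tau c * tau b * e nu).
  by move=> Inu hb hc far; eexists; apply: tau_far.
have := central_mul_e_span (@Ibeta_tswap _ _ _ alpha beta) Ib_uniq e_mul x_e tau_e
  rels_tau_x rels_tau_sq tau_far_e rels_tau_braid generated Imu zC.
apply: lspan_sub => _ [s hs ->].
have [c [tt ->]] := xprod_xmono (fun p => x_e mu p Imu) x_x_e hs.
by apply/lspanZ/lspan_gen; exists mu, tt.
Qed.

Lemma central_in_sum_Pe z : (forall y, z * y = y * z) -> in_sum_Pe alpha beta e x z.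
Proof.
have [_ [sum_e _]] := rels.
move=> zC; apply: lspan_in_sum_Pe.
rewrite -[z]mulr1 -sum_e mulr_sumr; apply: lspan_sum => mu Imu.
exact: central_mul_e_Pe.
Qed.

End CyclotomicQuotient.

Unset Implicit Arguments.
Set Strict Implicit.
Set Printing Implicit Defensive.

Theorem lemma5p5
  (k : fieldType) (hk : (2%:R : k) != 0)
  (I : finType) (a : I -> I -> int) (d : I -> nat)
  (m : nat) (alpha : I -> 'rV[int]_m) (h : I -> 'cV[int]_m) (par : I -> bool)
  (hcart : cartan_superdatum a d alpha h par)
  (Bf : 'M[int]_m) (hBf : compatible_form d alpha h Bf)
  (t : I -> I -> nat -> nat -> k) (ht : Q_coeffs a alpha Bf par t)
  (Lam : 'rV[int]_m) (hLam : forall i, 0 <= pairing (h i) Lam)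
  (js : seq I) (hjs : uniq js)
  (A : algType k) (e : (size js).-tuple I -> A) (x tau : nat -> A)
  (hA : is_cycQH a par t (fun i => `|pairing (h i) Lam|%N) alpha
           (\sum_(i <- js) alpha i) e x tau) :
  forall z : A, (forall y : A, z * y = y * z) ->
    in_sum_Pe alpha (\sum_(i <- js) alpha i) e x z.
Proof.
move=> z zC; case: hA => rels generated _.
have [_ [_ [_ [_ [_ [indep _]]]]]] := hcart.
apply: central_in_sum_Pe rels _ generated z zC => nu /eqP/(perm_eq_of_indep indep) nu_js.
by rewrite (perm_uniq nu_js).
Qed.
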